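(* Let $D$ be an arc-colored strongly connected tournament on $n\geq 3$ vertices. If $c(D)\geq \frac{n(n-1)}{2}-n+3$, then $D$ contains a rainbow triangle.
   Context: A tournament is obtained from $K_n$ by orienting each edge in exactly one direction; it is strongly connected if for every ordered pair of distinct vertices $x,y$ there is a directed path from $x$ to $y$. An arc-coloring is any map $C:A(D)\to\mathbb{N}$; $c(D)$ is the number of distinct colors used on the arcs. A rainbow triangle is a directed cycle of length 3 whose arcs have pairwise distinct colors. *)

From mathcomp Require Import all_boot.
Set Implicit Arguments. Unset Strict Implicit. Unset Printing Implicit Defensive.

Definition is_tournament (T : finType) (a : rel T) : Prop :=
  (forall x, ~~ a x x) /\
  (forall x y, x != y -> (a x y || a y x)) /\
  (forall x y, a x y -> ~~ a y x).

Definition strongly_connected (T : finType) (a : rel T) : Prop :=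
  forall x y, connect a x y.

(* arc-colouring C : T -> T -> nat, only its values on arcs matter *)
Definition arcs (T : finType) (a : rel T) : seq (T * T) :=
  enum [pred p : T * T | a p.1 p.2].

Definition num_colors (T : finType) (a : rel T) (C : T -> T -> nat) : nat :=
  size (undup [seq C p.1 p.2 | p <- arcs a]).

Definition has_rainbow_triangle (T : finType) (a : rel T) (C : T -> T -> nat) : Prop :=
  exists x y z : T, [/\ a x y, a y z, a z x &
    [/\ C x y != C y z, C y z != C z x & C x y != C z x]].

From mathcomp Require Import all_boot zify.
Set Implicit Arguments. Unset Strict Implicit. Unset Printing Implicit Defensive.

(* Assume D has no rainbow triangle and call a vertex set S few-coloured when
   c(D[S]) + |S| <= C(|S|,2) + 2.  A strong subtournament S of a strong
   tournament D, S <> V(D), extends to a larger strong one in one of two ways: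
   by a vertex v on a 3-cycle v -> x -> y -> v with x, y in S, or by an arc
   b -> c outside S with S => b and c => S.  In the first case the |S| new
   arcs carry at most |S| - 1 new colours, since the 3-cycle through v repeats
   a colour; in the second the 2|S| + 1 new arcs carry at most |S| + 1, since
   every 3-cycle s -> b -> c -> s repeats a colour.  Hence being few-coloured
   propagates from S once |S| >= 2; one step from a single vertex already
   gives a few-coloured strong set, so V(D) is few-coloured, i.e.
   c(D) <= C(n,2) - n + 2. *)

Section ArcColours.

Variables (T : finType) (C : T -> T -> nat).

Definition arc_colours (a : rel T) : seq nat := [seq C p.1 p.2 | p <- arcs a].

Lemma mem_arc_colours (a : rel T) x y : a x y -> C x y \in arc_colours a.
Proof. by move=> axy; apply/mapP; exists (x, y); rewrite ?mem_enum. Qed.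

Lemma arc_coloursP (a : rel T) k :
  k \in arc_colours a -> exists x y, a x y /\ k = C x y.
Proof. by case/mapP => -[x y]; rewrite mem_enum => axy ->; exists x, y. Qed.

Lemma num_colors_le_cat (a a' : rel T) (s : seq nat) :
  {subset arc_colours a <= arc_colours a' ++ s} ->
  num_colors a C <= num_colors a' C + size s.
Proof.
move=> sub; rewrite /num_colors -/(arc_colours a) -/(arc_colours a') -size_cat.
apply: uniq_leq_size => [|k]; first exact: undup_uniq.
by rewrite mem_undup mem_cat mem_undup => /sub; rewrite mem_cat.
Qed.

End ArcColours.

Lemma connect_exit (T : finType) (e : rel T) (X : {set T}) x y :
  connect e x y -> x \in X -> y \notin X ->
  exists u w, [/\ e u w, u \in X & w \notin X].
Proof.
case/connectP => p; elim: p x => [|z p IHp] x /=; first by move=> _ -> ->.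
case/andP => exz pz yz xX; case zX: (z \in X); first exact: IHp pz yz zX.
by exists x, z; rewrite exz xX zX.
Qed.

Lemma has_rainbow_triangleP (T : finType) (a : rel T) (C : T -> T -> nat) :
  reflect (has_rainbow_triangle a C)
    [exists x, exists y, exists z, [&& a x y, a y z, a z x,
       C x y != C y z, C y z != C z x & C x y != C z x]].
Proof.
apply: (iffP existsP) => [[x /existsP [y /existsP [z]]] | [x [y [z [axy ayz azx]]]]].
  by case/and5P => axy ayz azx xy_yz /andP [yz_zx xy_zx]; exists x, y, z.
case=> xy_yz yz_zx xy_zx; exists x; apply/existsP; exists y; apply/existsP; exists z.
by rewrite axy ayz azx xy_yz yz_zx xy_zx.
Qed.

Definition induced (T : finType) (a : rel T) (S : {set T}) : rel T :=
  fun x y => [&& a x y, x \in S & y \in S].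
Arguments induced {T} a S x y /.

Section InducedSubdigraphs.

Variables (T : finType) (a : rel T).

Definition strong_on (S : {set T}) : Prop :=
  forall x y, x \in S -> y \in S -> connect (induced a S) x y.

Lemma connect_induced_subset (S S' : {set T}) x y :
  S \subset S' -> connect (induced a S) x y -> connect (induced a S') x y.
Proof.
move=> /subsetP sSS'; apply: connect_sub => u w /and3P [auw uS wS].
by apply: connect1; rewrite /= auw !sSS'.
Qed.

Lemma strong_on_hub (S : {set T}) h :
  (forall x, x \in S -> connect (induced a S) x h /\ connect (induced a S) h x) ->
  strong_on S.
Proof. by move=> hub x y /hub[xh _] /hub[_ hy]; apply: connect_trans xh hy. Qed.

Lemma strong_on_set1 x : strong_on [set x].
Proof. by move=> y z /set1P -> /set1P ->; apply: connect0. Qed.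

Lemma strong_on_setU1 (S : {set T}) v x y :
  strong_on S -> x \in S -> y \in S -> a v x -> a y v -> strong_on (v |: S).
Proof.
move=> strongS xS yS avx ayv; have sSvS : S \subset v |: S := subsetU1 v S.
have lift u w : u \in S -> w \in S -> connect (induced a (v |: S)) u w.
  by move=> uS wS; apply: connect_induced_subset sSvS (strongS u w uS wS).
apply: (strong_on_hub (h := x)) => u /setU1P [->|uS]; last by split; apply: lift.
split; first by apply: connect1; rewrite /= avx !inE eqxx xS orbT.
apply: connect_trans (lift _ _ xS yS) (connect1 _).
by rewrite /= ayv !inE eqxx yS orbT.
Qed.

Lemma strong_on_setU2 (S : {set T}) b c s :
  strong_on S -> s \in S -> a b c -> (forall s, s \in S -> a s b && a c s) ->
  strong_on (c |: (b |: S)).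
Proof.
move=> strongS sS abc dom; set S' := c |: (b |: S).
have sSS' : S \subset S' := subset_trans (subsetU1 b S) (subsetU1 c _).
have /andP [asb acs] := dom s sS.
have cs : connect (induced a S') c s by apply: connect1; rewrite /= acs !inE eqxx sS !orbT.
have bc : connect (induced a S') b c by apply: connect1; rewrite /= abc !inE !eqxx !orbT.
have sb : connect (induced a S') s b by apply: connect1; rewrite /= asb !inE !eqxx sS !orbT.
apply: (strong_on_hub (h := s)) => u; rewrite !inE => /or3P [/eqP->|/eqP->|uS].
- by split; last apply: connect_trans sb bc.
- by split; first apply: connect_trans bc cs.
- by split; apply: connect_induced_subset sSS' _; apply: strongS.
Qed.

End InducedSubdigraphs.

Lemma num_colors_induced_setT (T : finType) (a : rel T) (C : T -> T -> nat) :
  num_colors (induced a [set: T]) C = num_colors a C.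
Proof.
rewrite /num_colors /arcs (eq_enum (_ : _ =i [pred p : T * T | a p.1 p.2])) //.
by move=> p; rewrite inE /= !inE !andbT.
Qed.

Section Tournament.

Variables (T : finType) (a : rel T).
Hypothesis tour : is_tournament a.

Lemma tournament_irrefl x : ~~ a x x.
Proof. by case: tour. Qed.

Lemma tournament_asym x y : a x y -> ~~ a y x.
Proof. by case: tour => _ [_]; apply. Qed.

Lemma tournament_total x y : x != y -> ~~ a x y -> a y x.
Proof. by case: tour => _ [total _] /total; case: (a x y). Qed.

Lemma tournament_neq x y : a x y -> x != y.
Proof. by apply: contraTneq => ->; apply: tournament_irrefl. Qed.

Lemma mixed_vertex_triangle (S : {set T}) v u w :
  strong_on a S -> v \notin S -> u \in S -> w \in S -> a u v -> a v w ->
  exists x y, [/\ x \in S, y \in S, a v x, a x y & a y v].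
Proof.
move=> strongS vS uS wS auv avw; pose O := [set x in S | a v x].
have wO : w \in O by rewrite inE wS avw.
have uO : u \notin O by rewrite inE uS (negbTE (tournament_asym auv)).
have [x [y [/and3P [axy xS yS] xO yO]]] := connect_exit (strongS w u wS uS) wO uO.
move: xO yO; rewrite !inE xS yS /= => avx navy; exists x, y; split=> //.
by apply: tournament_total navy; apply: contraTneq yS => <-.
Qed.

Lemma strong_extension (S : {set T}) s0 v0 :
  strongly_connected a -> strong_on a S -> s0 \in S -> v0 \notin S ->
  (exists v x y, [/\ v \notin S, x \in S, y \in S & [/\ a v x, a x y & a y v]]) \/
  (exists b c, [/\ b \notin S, c \notin S, a b c &
     forall s, s \in S -> a s b && a c s]).
Proof.
move=> strongT strongS s0S v0S.
case: (boolP [exists v, [exists u, [exists w,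
  [&& v \notin S, u \in S, w \in S, a u v & a v w]]]]).
  case/existsP => v /existsP [u /existsP [w /and5P [vS uS wS auv avw]]]; left.
  have [x [y [xS yS avx axy ayv]]] := mixed_vertex_triangle strongS vS uS wS auv avw.
  by exists v, x, y.
move=> /existsPn nomixed; right.
have {}nomixed v u w : v \notin S -> u \in S -> w \in S -> a u v -> ~~ a v w.
  move=> vS uS wS auv; apply: contraNN (nomixed v) => avw.
  by apply/existsP; exists u; apply/existsP; exists w; rewrite vS uS wS auv avw.
pose B := [set v | (v \notin S) && [exists s in S, a s v]].
have domB u s : u \in B -> s \in S -> a s u.
  rewrite inE => /andP [uS /exists_inP [s' s'S as'u]] sS.
  by apply: tournament_total (nomixed _ _ _ uS s'S sS as'u); apply: contraTneq sS => <-.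
have domA w s : w \notin S :|: B -> s \in S -> a w s.
  rewrite !inE negb_or => /andP [wS wB] sS.
  apply: tournament_total; first by apply: contraTneq sS => ->.
  by apply: contra wB => asw; rewrite wS; apply/exists_inP; exists s.
have [u [w [auw uB wSB]]] : exists u w, [/\ a u w, u \in B & w \notin S :|: B].
  have s0B : s0 \notin B by rewrite inE s0S.
  case: (boolP (v0 \in B)) => v0B.
    have [u [w [auw uB wB]]] := connect_exit (strongT v0 s0) v0B s0B.
    exists u, w; split; rewrite // inE negb_or wB andbT.
    by apply: contraTN auw => wS; apply: tournament_asym; apply: domB.
  have s0SB : s0 \in S :|: B by rewrite inE s0S.
  have v0SB : v0 \notin S :|: B by rewrite inE negb_or v0S.
  have [u [w [auw uSB wSB]]] := connect_exit (strongT s0 v0) s0SB v0SB.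
  exists u, w; split=> //; case/setUP: uSB => // uS.
  by move: wSB; rewrite !inE negb_or => /andP [-> /negP []]; apply/exists_inP; exists u.
have uS : u \notin S by move: uB; rewrite inE => /andP [].
have wS : w \notin S by move: wSB; rewrite inE negb_or => /andP [].
by exists u, w; split=> // s sS; rewrite (domB _ _ uB sS) (domA _ _ wSB sS).
Qed.

End Tournament.

Section RainbowFree.

Variables (T : finType) (a : rel T) (C : T -> T -> nat).
Hypotheses (tour : is_tournament a) (no_rainbow : ~ has_rainbow_triangle a C).

Lemma triangle_colour_repeat x y z : a x y -> a y z -> a z x ->
  [|| C x y == C y z, C y z == C z x | C x y == C z x].
Proof.
move=> axy ayz azx; apply: contraT; rewrite !negb_or => /and3P [xy_yz yz_zx xy_zx].
by case: no_rainbow; exists x, y, z.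
Qed.

Lemma num_colors_setU1 (S : {set T}) v x y :
  x \in S -> y \in S -> a v x -> a x y -> a y v ->
  num_colors (induced a (v |: S)) C + 1 <= num_colors (induced a S) C + #|S|.
Proof.
move=> xS yS avx axy ayv.
pose e z := if a v z then C v z else C z v.
(* The colour of the arc between v and d already occurs elsewhere: on x -> y,
   or on the arc between v and the other vertex of the 3-cycle. *)
pose d := if C v x == C x y then x else y.
pose new := [seq e z | z <- enum (S :\ d)].
have dS : d \in S by rewrite /d; case: ifP.
have e_new z : z \in S -> e z \in arc_colours C (induced a S) ++ new.
  move=> zS; rewrite mem_cat; case: (eqVneq z d) => [->|zd]; last first.
    by rewrite (map_f e) ?orbT // mem_enum !inE zd.
  have xyS : C x y \in arc_colours C (induced a S).
    by apply: mem_arc_colours; rewrite /= axy xS.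
  have [vx_xy | vx_xy] := eqVneq (C v x) (C x y).
    have -> : d = x by rewrite /d vx_xy eqxx.
    by rewrite /e avx vx_xy xyS.
  have dy : d = y by rewrite /d (negbTE vx_xy).
  have -> : e d = C y v by rewrite dy /e (negbTE (tournament_asym tour ayv)).
  have := triangle_colour_repeat avx axy ayv; rewrite (negbTE vx_xy) /=.
  case/orP => /eqP <-; first by rewrite xyS.
  have -> : C v x = e x by rewrite /e avx.
  by rewrite (map_f e) ?orbT // mem_enum !inE dy (tournament_neq tour axy).
apply: leq_trans (_ : _ <= num_colors (induced a S) C + size new + 1) _.
  rewrite leq_add2r; apply: num_colors_le_cat => k.
  case/arc_coloursP => p [q [/and3P [apq pS qS] ->]].
  case/setU1P: pS => [pv | pS].
    case/setU1P: qS => [qv | qS].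
      by move: apq; rewrite pv qv (negbTE (tournament_irrefl tour v)).
    by rewrite pv in apq *; have := e_new q qS; rewrite /e apq.
  case/setU1P: qS => [qv | qS]; last by rewrite mem_cat mem_arc_colours //= apq pS qS.
  rewrite qv in apq *; have := e_new p pS.
  by rewrite /e (negbTE (tournament_asym tour apq)).
by rewrite size_map -cardE (cardsD1 d S) dS addn1 addnS.
Qed.

Lemma num_colors_setU2 (S : {set T}) b c :
  a b c -> (forall s, s \in S -> a s b && a c s) ->
  num_colors (induced a (c |: (b |: S))) C <= num_colors (induced a S) C + #|S| + 1.
Proof.
move=> abc dom.
(* The non-rainbow 3-cycle s -> b -> c -> s uses only the colours C b c, f s. *)
pose f s := if C s b == C b c then C c s else C s b.
pose new := C b c :: [seq f s | s <- enum S].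
have new_sb s : s \in S -> C s b \in new /\ C c s \in new.
  move=> sS; have /andP [asb acs] := dom s sS.
  have fs : f s \in new by rewrite inE (map_f f) ?orbT ?mem_enum.
  have bc : C b c \in new := mem_head _ _.
  rewrite /f in fs; case: eqP fs => [-> | sb_bc] fs //.
  split=> //; have := triangle_colour_repeat asb abc acs; rewrite (introF eqP sb_bc) /=.
  by case/orP => /eqP <-.
rewrite -addnA; have -> : #|S| + 1 = size new by rewrite /= size_map -cardE addn1.
apply: num_colors_le_cat => k /arc_coloursP [p [q [/and3P [apq pS qS] ->]]].
rewrite mem_cat; apply/orP.
move: pS qS; rewrite !inE.
case/or3P => [/eqP ? | /eqP ? | pS]; case/or3P => [/eqP ? | /eqP ? | qS];
  try subst p; try subst q.
- by rewrite (negbTE (tournament_irrefl tour c)) in apq.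
- by rewrite (negbTE (tournament_asym tour abc)) in apq.
- by right; case: (new_sb q qS).
- by right; exact: mem_head.
- by rewrite (negbTE (tournament_irrefl tour b)) in apq.
- by case/andP: (dom q qS) => /(tournament_asym tour)/negP.
- by case/andP: (dom p pS) => _ /(tournament_asym tour)/negP.
- by right; case: (new_sb p pS).
- by left; apply: mem_arc_colours; rewrite /= apq pS qS.
Qed.

Lemma card_setU2 (S : {set T}) b c :
  b \notin S -> c \notin S -> a b c -> #|c |: (b |: S)| = #|S|.+2.
Proof.
move=> bS cS abc; rewrite !cardsU1 !inE negb_or bS cS eq_sym.
by rewrite (tournament_neq tour abc).
Qed.

Lemma strong_extension_colours (S : {set T}) s0 v0 :
  strongly_connected a -> strong_on a S -> s0 \in S -> v0 \notin S ->
  exists2 S' : {set T}, strong_on a S' &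
    [\/ #|S'| = #|S|.+1 /\
         num_colors (induced a S') C + 1 <= num_colors (induced a S) C + #|S|
      | #|S'| = #|S|.+2 /\
         num_colors (induced a S') C <= num_colors (induced a S) C + #|S| + 1].
Proof.
move=> strongT strongS s0S v0S.
case: (strong_extension tour strongT strongS s0S v0S).
  case=> v [x [y [vS xS yS [avx axy ayv]]]]; exists (v |: S).
    exact: strong_on_setU1 strongS xS yS avx ayv.
  by left; rewrite cardsU1 vS (num_colors_setU1 xS yS avx axy ayv).
case=> b [c [bS cS abc dom]]; exists (c |: (b |: S)).
  exact: strong_on_setU2 strongS s0S abc dom.
by right; rewrite card_setU2 // num_colors_setU2.
Qed.

Definition few_colours (S : {set T}) : bool :=
  num_colors (induced a S) C + #|S| <= 'C(#|S|, 2) + 2.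

Lemma few_colours_grow (S : {set T}) :
  strongly_connected a -> strong_on a S -> 1 < #|S| -> few_colours S ->
  few_colours [set: T].
Proof.
move=> strongT; have [k] := ubnP (#|T| - #|S|).
elim: k S => // k IHk S ltTS strongS gt1S fewS.
have [ltST | geST] := ltnP #|S| #|T|; last first.
  suff <- : S = [set: T] by [].
  by apply/eqP; rewrite eqEcard subsetT cardsT.
have /card_gt0P [s0 s0S] : 0 < #|S| by lia.
have /card_gt0P [v0] : 0 < #|~: S| by have := cardsC S; lia.
rewrite inE => v0S.
have [S' strongS' ext] := strong_extension_colours strongT strongS s0S v0S.
rewrite /few_colours in fewS.
by case: ext => -[cardS' ncS']; apply: (IHk S') => //;
  rewrite ?/few_colours cardS' ?(binS _ 1) ?bin1 ?bin0; lia.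
Qed.

Lemma num_colors_induced_set1 x : num_colors (induced a [set x]) C = 0.
Proof.
rewrite /num_colors /arcs (eq_enum (_ : _ =i pred0)) ?enum0 // => -[y z].
rewrite inE /=; apply/and3P => -[ayz /set1P yx /set1P zx].
by move: ayz; rewrite yx zx (negbTE (tournament_irrefl tour x)).
Qed.

Lemma few_colours_setT : strongly_connected a -> 1 < #|T| -> few_colours [set: T].
Proof.
move=> strongT gt1T; have /card_gt0P [x _] : 0 < #|T| by lia.
have /card_gt0P [v] : 0 < #|[set~ x]| by rewrite cardsC1; lia.
rewrite in_setC => vx.
have [S strongS ext] :=
  strong_extension_colours strongT (@strong_on_set1 _ a x) (set11 x) vx.
rewrite num_colors_induced_set1 cards1 in ext.
apply: (few_colours_grow strongT strongS); rewrite /few_colours;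
  by case: ext => -[-> ncS]; rewrite ?(binS _ 1) ?bin1 ?bin0; lia.
Qed.

End RainbowFree.

Theorem theorem4 (T : finType) (a : rel T) (C : T -> T -> nat) :
  3 <= #|T| ->
  is_tournament a ->
  strongly_connected a ->
  'C(#|T|, 2) + 3 <= num_colors a C + #|T| ->
  has_rainbow_triangle a C.
Proof.
move=> ge3T tour strongT many_colours.
case: (has_rainbow_triangleP a C) => // no_rainbow.
have := few_colours_setT tour no_rainbow strongT (ltnW ge3T).
by rewrite /few_colours num_colors_induced_setT cardsT; lia.
Qed.
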